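(* Let $A$ be a binary $n\times m$ matrix. Then $A$ has at most one binary base that is disjoint in rows.
   Context: A set $X$ of $\{0,1\}$-vectors spans a vector $y$ (binary sense) if $y=\sum_{x\in X}c_xx$ with $c_x\in\{0,1\}$ and ordinary addition. A binary base of $A$ is a set of $\{0,1\}$ column vectors of length $n$ spanning every column of $A$, of minimum cardinality among such spanning sets (this minimum equals the binary rank of $A$). A base is disjoint in rows if no two distinct vectors of the base have a $1$ in the same coordinate. *)

From mathcomp Require Import all_boot all_order all_algebra.
Set Implicit Arguments. Unset Strict Implicit. Unset Printing Implicit Defensive.

(* A {0,1}-vector of length n: a finite function 'I_n -> bool (true = 1). *)
Definition bvec (n : nat) := {ffun 'I_n -> bool}.

(* X spans y in the binary sense: y = sum_{x in X} c_x x with c_x in {0,1},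
   using ordinary (natural number) addition, coordinatewise. *)
Definition bspans (n : nat) (X : {set bvec n}) (y : 'I_n -> bool) : Prop :=
  exists c : bvec n -> bool,
    forall i : 'I_n, (y i : nat) = (\sum_(x in X) (c x : nat) * (x i : nat))%N.

Definition spans_cols (n m : nat) (A : 'M[bool]_(n, m)) (X : {set bvec n}) : Prop :=
  forall j : 'I_m, bspans X (fun i => A i j).

Definition binary_base (n m : nat) (A : 'M[bool]_(n, m)) (X : {set bvec n}) : Prop :=
  spans_cols A X /\ forall Y : {set bvec n}, spans_cols A Y -> #|X| <= #|Y|.

Definition disjoint_in_rows (n : nat) (X : {set bvec n}) : Prop :=
  forall x y : bvec n, x \in X -> y \in X -> x != y ->
    forall i : 'I_n, ~~ (x i && y i).

From mathcomp Require Import all_boot all_order all_algebra.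
Set Implicit Arguments. Unset Strict Implicit. Unset Printing Implicit Defensive.

(* When the vectors of a spanning set X have disjoint supports, the coefficient
   of x in the expansion of column j is forced to be A i j for every i in the
   support of x, so all rows of A in that support are equal.  By minimality the
   support of x contains a nonzero row, and two distinct vectors of X never
   carry equal rows (otherwise one could drop x, or merge the two vectors).
   Hence every vector of a disjoint binary base is the indicator of a class of
   equal nonzero rows of A, and every such class occurs: the base is determined
   by A. *)

Definition row_class n m (A : 'M[bool]_(n, m)) (i : 'I_n) : bvec n :=
  [ffun k => row k A == row i A].

Definition nonzero_row_classes n m (A : 'M[bool]_(n, m)) : {set bvec n} :=
  [set row_class A i | i : 'I_n & [exists j, A i j]].

Definition merge_vec n (x x' : bvec n) : bvec n := [ffun k => x k || x' k].

Lemma bspans_support n (X : {set bvec n}) (y : 'I_n -> bool) i :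
  bspans X y -> y i -> exists2 x, x \in X & x i.
Proof.
case=> c hc yi; apply/exists_inP; apply: contraLR yi => /exists_inPn noX.
have := hc i; rewrite big1 => [|v /noX /negbTE ->]; last by rewrite muln0.
by case: (y i).
Qed.

Section DisjointSpanningSet.

Variables (n m : nat) (A : 'M[bool]_(n, m)) (X : {set bvec n}).
Hypothesis dX : disjoint_in_rows X.

Lemma sum_disjoint_rows (c : bvec n -> bool) x i : x \in X -> x i ->
  (\sum_(v in X) (c v : nat) * (v i : nat) = c x)%N.
Proof.
move=> xX xi; rewrite (big_setD1 x xX) /= xi muln1 big1 ?addn0 //.
move=> v /setD1P [vx vX]; have := dX vX xX vx i.
by rewrite xi andbT => /negbTE ->; rewrite muln0.
Qed.

Lemma bspans_disjoint_coef (y : 'I_n -> bool) (c : bvec n -> bool) x i :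
  (forall k, (y k : nat) = \sum_(v in X) (c v : nat) * (v k : nat))%N ->
  x \in X -> x i -> y i = c x.
Proof.
move=> hc xX xi; have := hc i; rewrite (sum_disjoint_rows c xX xi).
by case: (y i); case: (c x).
Qed.

Hypothesis sX : spans_cols A X.

Lemma row_eq_on_support x i k : x \in X -> x i -> x k -> row k A = row i A.
Proof.
move=> xX xi xk; apply/rowP => j; rewrite !mxE.
have [c hc] := sX j.
by rewrite (bspans_disjoint_coef hc xX xk) (bspans_disjoint_coef hc xX xi).
Qed.

Lemma spans_cols_setD1 x :
  x \in X -> (forall i j, x i -> ~~ A i j) -> spans_cols A (X :\ x).
Proof.
move=> xX xA j; have [c hc] := sX j; exists c => k.
rewrite hc (big_setD1 x xX) /=.
have [xk|] := boolP (x k); last by rewrite muln0.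
by rewrite -(bspans_disjoint_coef hc xX xk) (negbTE (xA k j xk)).
Qed.

Lemma merge_vec_notin x x' i : x \in X -> x i -> merge_vec x x' \notin X :\ x.
Proof.
move=> xX xi; apply/negP => /setD1P [ux uX].
by have := dX uX xX ux i; rewrite ffunE xi.
Qed.

Lemma spans_cols_merge x x' i i' :
    x \in X -> x' \in X -> x != x' -> x i -> x' i' -> row i A = row i' A ->
  spans_cols A (merge_vec x x' |: (X :\ x :\ x')).
Proof.
move=> xX x'X xx' xi x'i' rowii' j; have [c hc] := sX j.
have cxx' : c x = c x'.
  rewrite -(bspans_disjoint_coef hc xX xi) -(bspans_disjoint_coef hc x'X x'i').
  by move/rowP/(_ j): rowii'; rewrite !mxE.
have uD : merge_vec x x' \notin X :\ x :\ x'.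
  by rewrite in_setD1 negb_and (merge_vec_notin x' xX xi) orbT.
have x'X1 : x' \in X :\ x by rewrite in_setD1 eq_sym xx'.
exists (fun v => if v == merge_vec x x' then c x else c v) => k.
rewrite hc big_setU1 //= eqxx (big_setD1 x xX) (big_setD1 x' x'X1) /= addnA.
congr (_ + _); last first.
  by apply: eq_bigr => v vD; case: eqP vD uD => // ->->.
have := dX xX x'X xx' k; rewrite ffunE -cxx'.
by case: (c x); case: (x k); case: (x' k).
Qed.

End DisjointSpanningSet.

Section DisjointBinaryBase.

Variables (n m : nat) (A : 'M[bool]_(n, m)) (X : {set bvec n}).
Hypotheses (bX : binary_base A X) (dX : disjoint_in_rows X).

Lemma base_support_nonzero x : x \in X -> exists i j, x i && A i j.
Proof.
move=> xX; have [/existsP [i /existsP [j xAij]]|] :=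
  boolP [exists i, exists j, x i && A i j]; first by exists i, j.
rewrite negb_exists => /forallP noA; exfalso.
have sD : spans_cols A (X :\ x).
  apply: (spans_cols_setD1 dX bX.1 xX) => i j xi.
  by move: (noA i); rewrite negb_exists => /forallP /(_ j); rewrite xi.
by have := bX.2 _ sD; rewrite (cardsD1 x X) xX add1n ltnn.
Qed.

Lemma base_row_inj x x' i i' : x \in X -> x' \in X -> x i -> x' i' ->
  row i A = row i' A -> x = x'.
Proof.
move=> xX x'X xi x'i' rowii'; apply/eqP/negPn/negP => xx'.
have := bX.2 _ (spans_cols_merge dX bX.1 xX x'X xx' xi x'i' rowii').
have x'X1 : x' \in X :\ x by rewrite in_setD1 eq_sym xx'.
rewrite (cardsD1 x X) xX (cardsD1 x' (X :\ x)) x'X1 cardsU1.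
by rewrite leqNgt add1n ltnS leq_add2r leq_b1.
Qed.

Lemma base_vecE x i : x \in X -> x i -> x = row_class A i.
Proof.
move=> xX xi; apply/ffunP => k; rewrite ffunE.
apply/idP/eqP => [xk|rowki]; first exact: (row_eq_on_support dX bX.1 xX xi xk).
have [i0 [j /andP [xi0 Ai0j]]] := base_support_nonzero xX.
have Akj : A k j.
  move/rowP/(_ j): rowki; rewrite !mxE => ->.
  by move/rowP/(_ j): (row_eq_on_support dX bX.1 xX xi0 xi); rewrite !mxE => ->.
have [x' x'X x'k] := bspans_support (bX.1 j) Akj.
by rewrite (base_row_inj xX x'X xi x'k (esym rowki)).
Qed.

Lemma disjoint_baseE : X = nonzero_row_classes A.
Proof.
apply/setP => x; apply/idP/imsetP => [xX|[i /[!inE] /existsP [j Aij] ->]].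
  have [i [j /andP [xi Aij]]] := base_support_nonzero xX.
  by exists i; [rewrite inE; apply/existsP; exists j | exact: base_vecE].
have [y yX yi] := bspans_support (bX.1 j) Aij.
by rewrite -(base_vecE yX yi).
Qed.

End DisjointBinaryBase.

Theorem mainTheorem11 (n m : nat) (A : 'M[bool]_(n, m)) (X Y : {set bvec n}) :
  binary_base A X -> disjoint_in_rows X ->
  binary_base A Y -> disjoint_in_rows Y ->
  X = Y.
Proof.
by move=> bX dX bY dY; rewrite (disjoint_baseE bX dX) (disjoint_baseE bY dY).
Qed.
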